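(* Let $\mathcal S\subset\mathbb R^n$ be a finite positive spanning set of unit vectors and $P=\{x: x^\top d\le 1\ \forall d\in\mathcal S\}$. Consider the randomized algorithm which sets $v=\mathbf 0$ and, at each iteration, samples $c$ uniformly from the unit sphere $\{x\in\mathbb R^n:\|x\|=1\}$ (independently across iterations), computes a vertex solution $\bar v$ of the linear program $\max c^\top x$ subject to $x\in P$, and replaces $v$ by $\bar v$ if $\|\bar v\|>\|v\|$; after $k$ iterations it outputs $1/\|v\|$ and $v/\|v\|$. Then, with probability $1$, when run ad infinitum (i.e., as $k\to\infty$), the algorithm finds a minimizer: almost surely there is an iteration after which $v$ is a maximizer of $\|x\|^2$ over $P$, so that $v/\|v\|$ minimizes $\max_{d\in\mathcal S}d^\top u$ over unit vectors $u$ and $1/\|v\|$ equals the cosine measure of $\mathcal S$.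
   Context: A finite set $\{d_1,\dots,d_k\}\subset\mathbb R^n$ is positive spanning if $\{\sum_i\lambda_id_i:\lambda_i\ge0\}=\mathbb R^n$. The cosine measure of a finite set $\mathcal S\subset\mathbb R^n\setminus\{\mathbf 0\}$ is $\operatorname{cm}(\mathcal S)=\min_{\|u\|=1}\max_{d\in\mathcal S}\frac{d^\top u}{\|d\|}$, and its minimizers are the cosine vectors. For such $\mathcal S$ of unit vectors, maximizers $x^*$ of $\|x\|^2$ over $P$ exist and correspond to cosine vectors $x^*/\|x^*\|$ with $\operatorname{cm}(\mathcal S)=1/\|x^*\|$. *)

From HB Require Import structures.
From mathcomp Require Import all_boot all_order all_algebra.
From mathcomp Require Import all_classical all_reals all_analysis.
Set Implicit Arguments. Unset Strict Implicit. Unset Printing Implicit Defensive.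
Import Order.TTheory GRing.Theory Num.Theory.
Import numFieldNormedType.Exports.
Local Open Scope classical_set_scope.
Local Open Scope ring_scope.

Section Geometry.
Context {R : realType} {n : nat}.

Definition dot (x y : 'rV[R]_n) : R := \sum_(i < n) x 0 i * y 0 i.
Definition enorm (x : 'rV[R]_n) : R := Num.sqrt (dot x x).

Definition positive_spanning (S : seq 'rV[R]_n) : Prop :=
  forall x : 'rV[R]_n, exists l : 'I_(size S) -> R,
    (forall i, 0 <= l i) /\ x = \sum_(i < size S) l i *: S`_i.

Definition polar_polytope (S : seq 'rV[R]_n) : set 'rV[R]_n :=
  [set x | forall d, d \in S -> dot x d <= 1].

Definition is_vertex (A : set 'rV[R]_n) (x : 'rV[R]_n) : Prop :=
  A x /\ forall y z (t : R), A y -> A z -> 0 < t < 1 ->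
    x = t *: y + (1 - t) *: z -> y = z.

Definition is_LP_vertex_solution (A : set 'rV[R]_n) (c x : 'rV[R]_n) : Prop :=
  is_vertex A x /\ forall y, A y -> dot c y <= dot c x.

Definition is_norm_sq_maximizer (A : set 'rV[R]_n) (x : 'rV[R]_n) : Prop :=
  A x /\ forall y, A y -> enorm y ^+ 2 <= enorm x ^+ 2.

Definition max_cos (S : seq 'rV[R]_n) (u : 'rV[R]_n) : R :=
  sup [set dot d u / enorm d | d in [set d | d \in S]].

Definition unit_sphere : set 'rV[R]_n := [set x | enorm x = 1].

Definition cosine_measure (S : seq 'rV[R]_n) : R :=
  inf [set max_cos S u | u in unit_sphere].

Definition is_cosine_vector (S : seq 'rV[R]_n) (u : 'rV[R]_n) : Prop :=
  unit_sphere u /\ forall w, unit_sphere w -> max_cos S u <= max_cos S w.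

Fixpoint best_iterate (vbar : nat -> 'rV[R]_n) (k : nat) : 'rV[R]_n :=
  match k with
  | O => 0
  | k'.+1 => let v := best_iterate vbar k' in
             if enorm v < enorm (vbar k') then vbar k' else v
  end.

Definition orthogonal_mx (Q : 'M[R]_n) : Prop := Q *m Q^T = 1%:M.

Definition borel_rV : set_system 'rV[R]_n := <<s @open 'rV[R]_n >>.

End Geometry.

Section Probability.
Context {R : realType} {n : nat} {d : measure_display} {T : measurableType d}.

Definition random_vector (X : T -> 'rV[R]_n) : Prop :=
  forall A, borel_rV A -> measurable (X @^-1` A).

(** X is uniformly distributed on the unit sphere: its law is concentrated on
    the unit sphere and is invariant under all orthogonal transformations
    (the normalized surface measure is the unique such probability). *)
Definition uniform_on_sphere (Pr : probability T R) (X : T -> 'rV[R]_n) : Prop :=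
  Pr (X @^-1` unit_sphere) = 1%E /\
  forall (Q : 'M[R]_n) (A : set 'rV[R]_n), orthogonal_mx Q -> borel_rV A ->
    Pr (X @^-1` ((fun x => x *m Q) @^-1` A)) = Pr (X @^-1` A).

Definition mutually_independent (Pr : probability T R)
    (X : nat -> T -> 'rV[R]_n) : Prop :=
  forall (I : seq nat) (A : nat -> set 'rV[R]_n), uniq I ->
    (forall i, borel_rV (A i)) ->
    Pr (\bigcap_(i in [set i | i \in I]) (X i @^-1` A i)) =
    (\prod_(i <- I) Pr (X i @^-1` A i))%E.

End Probability.

(* The polar polytope P is compact, since S positively spans, and has finitely
   many vertices, each determined by its active constraints.  Let x* maximize
   |x|^2 over P.  A vertex v that is not a maximizer satisfies
   <x*, v> <= |x*|^2 - g for a gap g > 0 that is uniform over the vertices,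
   while a vertex solution of max <c, x> satisfies <c, v - x*> >= 0; by
   Cauchy-Schwarz the two are incompatible once c is close to c0 = x*/|x*|.
   Hence every vertex solution for c in a fixed ball U around c0 is a
   maximizer.  Finitely many balls congruent to U cover the sphere and, by
   orthogonal invariance, all have the same probability, so Pr(c_k in U) >= p
   for some p > 0; by independence all of c_0, ..., c_(K-1) miss U with
   probability at most (1 - p)^K, so almost surely some c_k hits U.  From then
   on the best iterate v is a maximizer, and a maximizer yields the cosine
   vector v/|v| with cm(S) = 1/|v|, because u / max_d <d, u> lies in P for
   every unit vector u. *)

From HB Require Import structures.
From mathcomp Require Import all_boot all_order all_algebra.
From mathcomp Require Import all_classical all_reals all_analysis.
From mathcomp Require Import ring lra.
Import Order.TTheory GRing.Theory Num.Theory.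
Import numFieldNormedType.Exports.
Local Open Scope classical_set_scope.
Local Open Scope ring_scope.

Set Implicit Arguments. Unset Strict Implicit. Unset Printing Implicit Defensive.

Section DotProduct.
Context {R : realType} {n : nat}.
Implicit Types x y z : 'rV[R]_n.

Lemma dotC x y : dot x y = dot y x.
Proof. by apply: eq_bigr => i _; rewrite mulrC. Qed.

Lemma dotDl x y z : dot (x + y) z = dot x z + dot y z.
Proof. by rewrite /dot -big_split; apply: eq_bigr => i _; rewrite !mxE mulrDl. Qed.

Lemma dotDr x y z : dot z (x + y) = dot z x + dot z y.
Proof. by rewrite dotC dotDl !(dotC z). Qed.

Lemma dotZl a x y : dot (a *: x) y = a * dot x y.
Proof. by rewrite /dot mulr_sumr; apply: eq_bigr => i _; rewrite !mxE mulrA. Qed.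

Lemma dotZr a x y : dot y (a *: x) = a * dot y x.
Proof. by rewrite dotC dotZl dotC. Qed.

Lemma dotNl x y : dot (- x) y = - dot x y.
Proof. by rewrite -scaleN1r dotZl mulN1r. Qed.

Lemma dotNr x y : dot y (- x) = - dot y x.
Proof. by rewrite dotC dotNl dotC. Qed.

Lemma dotBl x y z : dot (x - y) z = dot x z - dot y z.
Proof. by rewrite dotDl dotNl. Qed.

Lemma dotBr x y z : dot z (x - y) = dot z x - dot z y.
Proof. by rewrite dotDr dotNr. Qed.

Lemma dot0l x : dot 0 x = 0.
Proof. by rewrite /dot big1 // => i _; rewrite mxE mul0r. Qed.

Lemma dot0r x : dot x 0 = 0.
Proof. by rewrite dotC dot0l. Qed.

Lemma dot_sumr I (s : seq I) (F : I -> 'rV[R]_n) x :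
  dot x (\sum_(i <- s) F i) = \sum_(i <- s) dot x (F i).
Proof.
elim: s => [|a s IH]; first by rewrite !big_nil dot0r.
by rewrite !big_cons dotDr IH.
Qed.

Lemma dot_mx x y : dot x y = (x *m y^T) 0 0.
Proof. by rewrite !mxE; apply: eq_bigr => i _; rewrite !mxE. Qed.

Lemma dot_ge0 x : 0 <= dot x x.
Proof. by apply: sumr_ge0 => i _; rewrite -expr2 sqr_ge0. Qed.

Lemma sqr_coord_le_dot x i : x 0 i ^+ 2 <= dot x x.
Proof.
rewrite /dot (bigD1 i) //= -expr2 lerDl; apply: sumr_ge0 => j _.
by rewrite -expr2 sqr_ge0.
Qed.

Lemma dot_eq0 x : dot x x = 0 -> x = 0.
Proof.
move=> x0; apply/rowP => i; rewrite mxE; apply/eqP.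
by rewrite -sqrf_eq0 eq_le sqr_ge0 andbT -x0 sqr_coord_le_dot.
Qed.

Lemma dot_le_mean x y : 2 * dot x y <= dot x x + dot y y.
Proof.
have := dot_ge0 (x - y); rewrite !dotBl !dotBr (dotC y x) => xy_ge0; lra.
Qed.

Lemma dot_CauchySchwarz x y : dot x y ^+ 2 <= dot x x * dot y y.
Proof.
have [/dot_eq0 ->|yy_neq0] := eqVneq (dot y y) 0.
  by rewrite !dot0r expr0n mulr0.
have yy_gt0 : 0 < dot y y by rewrite lt_neqAle eq_sym yy_neq0 dot_ge0.
have := dot_ge0 (dot y y *: x - dot x y *: y).
rewrite !dotBl !dotBr !dotZl !dotZr (dotC y x) => h; nra.
Qed.

Lemma enorm_sq x : enorm x ^+ 2 = dot x x.
Proof. by rewrite /enorm sqr_sqrtr // dot_ge0. Qed.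

Lemma enormZ a x : enorm (a *: x) = `|a| * enorm x.
Proof.
by rewrite /enorm dotZl dotZr mulrA -expr2 sqrtrM ?sqr_ge0 // sqrtr_sqr.
Qed.

Lemma enorm_ltE x y : (enorm x < enorm y) = (dot x x < dot y y).
Proof. by rewrite /enorm !ltNge ler_psqrt // nnegrE dot_ge0. Qed.

Lemma unit_sphereE : unit_sphere = [set x : 'rV[R]_n | dot x x = 1].
Proof.
apply/seteqP; split => x /=; rewrite /unit_sphere /enorm /=.
  by move=> h; rewrite -(sqr_sqrtr (dot_ge0 x)) h expr1n.
by move=> ->; rewrite sqrtr1.
Qed.

End DotProduct.

Section Topology.
Context {R : realType} {n : nat}.
Implicit Types x p : 'rV[R]_n.

Lemma continuous_dot (f g : 'rV[R]_n -> 'rV[R]_n) :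
  continuous f -> continuous g -> continuous (fun x => dot (f x) (g x)).
Proof.
move=> f_cont g_cont; apply: continuous_big => [|i _ x].
  exact: add_continuous.
apply: continuousM.
  exact: (continuous_comp (f_cont x) (@coord_continuous R 1 n 0 i (f x))).
exact: (continuous_comp (g_cont x) (@coord_continuous R 1 n 0 i (g x))).
Qed.

(* The open ball of squared radius e. *)
Definition dball p (e : R) := [set x | dot (x - p) (x - p) < e].

Lemma open_dball p e : open (dball p e).
Proof.
have sub_cont : continuous (fun x => x - p).
  by move=> x; apply: continuousB; [exact: cvg_id | exact: cst_continuous].
apply: (@open_comp _ _ (fun x => dot (x - p) (x - p)) [set r | r < e]).
  by move=> x _; exact: continuous_dot.
exact: open_lt.
Qed.

Lemma closed_unit_sphere : closed (unit_sphere : set 'rV[R]_n).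
Proof.
have dot_cont : continuous (fun x : 'rV[R]_n => dot x x).
  by apply: (@continuous_dot id id) => x; exact: cvg_id.
have one_closed : closed [set r : R | r = 1] by exact: closed_eq.
by rewrite unit_sphereE; exact: (preimage_closed (fun x _ => dot_cont x) one_closed).
Qed.

Lemma compact_unit_sphere : compact (unit_sphere : set 'rV[R]_n).
Proof.
apply: (subclosed_compact closed_unit_sphere
  (rV_compact (fun i : 'I_n => @segment_compact R (-1) 1))).
move=> x; rewrite unit_sphereE /= => xx1 i.
have := sqr_coord_le_dot x i; rewrite xx1 in_itv /= => h.
by apply/andP; split; nra.
Qed.

Lemma closed_polar_polytope (S : seq 'rV[R]_n) : closed (polar_polytope S).
Proof.
have -> : polar_polytope S =
    \bigcap_(d in [set d | d \in S]) ((dot^~ d) @^-1` [set r | r <= 1]).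
  by apply/seteqP; split => x /= h d /h.
apply: closed_bigI => d _; apply: preimage_closed; last exact: closed_le.
move=> x _; apply: (@continuous_dot id (cst d)) => y.
  exact: cvg_id.
exact: cst_continuous.
Qed.

End Topology.

Section PolarPolytope.
Context {R : realType} {n : nat} (S : seq 'rV[R]_n).
Local Notation P := (polar_polytope S).

Lemma polar_polytope0 : P 0.
Proof. by move=> d _; rewrite dot0l. Qed.

Lemma dot_delta_mx (x : 'rV[R]_n) i : dot x (delta_mx 0 i) = x 0 i.
Proof.
rewrite /dot (bigD1 i) //= big1 ?addr0; first by rewrite mxE !eqxx mulr1.
by move=> j /negbTE ji; rewrite mxE ji andbF mulr0.
Qed.

Lemma delta_mx_polar_polytope i :
  (forall s, s \in S -> enorm s = 1) -> P (delta_mx 0 i).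
Proof.
move=> Sunit s sS; rewrite dotC dot_delta_mx.
have := sqr_coord_le_dot s i; rewrite -enorm_sq Sunit // expr1n => h; nra.
Qed.

Lemma norm_sq_maximizer_ge1 xs : (0 < n)%N ->
  (forall s, s \in S -> enorm s = 1) -> is_norm_sq_maximizer P xs -> 1 <= dot xs xs.
Proof.
move=> n_gt0 Sunit [_ xs_max].
have := xs_max _ (delta_mx_polar_polytope (Ordinal n_gt0) Sunit).
by rewrite !enorm_sq dot_delta_mx mxE !eqxx.
Qed.

Hypothesis Sspan : positive_spanning S.

Lemma polar_polytope_dot_ub (t : 'rV[R]_n) : exists B, forall x, P x -> dot x t <= B.
Proof.
have [l [l_ge0 ->]] := Sspan t.
exists (\sum_(i < size S) l i) => x Px.
rewrite dot_sumr; apply: ler_sum => i _; rewrite dotZr.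
by rewrite -[leRHS]mulr1 ler_wpM2l // Px // mem_nth.
Qed.

Lemma compact_polar_polytope : compact P.
Proof.
have coord_bounds i : exists B : R * R, forall x, P x -> B.1 <= x 0 i <= B.2.
  have [B1 ub] := polar_polytope_dot_ub (delta_mx 0 i).
  have [B2 lb] := polar_polytope_dot_ub (- delta_mx 0 i).
  exists (- B2, B1) => x Px /=; have := ub _ Px; have := lb _ Px.
  by rewrite dotNr !dot_delta_mx => ? ?; apply/andP; split; lra.
pose B i := projT1 (cid (coord_bounds i)).
pose box := [set x : 'rV[R]_n | forall i,
  (fun i => `[(B i).1, (B i).2]%classic) i (x ord0 i)].
have box_compact : compact box.
  exact: (rV_compact (fun i => @segment_compact R _ _)).
have P_box : P `<=` box.
  by move=> x Px i /=; rewrite in_itv /=; exact: (projT2 (cid (coord_bounds i))).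
exact: subclosed_compact (@closed_polar_polytope _ _ S) box_compact P_box.
Qed.

Lemma exists_norm_sq_maximizer : exists xs, is_norm_sq_maximizer P xs.
Proof.
have sq_cont : {within P, continuous (fun x : 'rV[R]_n => enorm x ^+ 2)}.
  have -> : (fun x : 'rV[R]_n => enorm x ^+ 2) = (fun x => dot x x).
    by apply: funext => x; rewrite enorm_sq.
  have id_cont : continuous (@id 'rV[R]_n) by move=> y; exact: cvg_id.
  exact/continuous_subspaceT/(continuous_dot id_cont id_cont).
have [xs Pxs xs_max] := EVT_max_rV (ex_intro _ 0 polar_polytope0)
  compact_polar_polytope sq_cont.
exists xs; split; first by move: Pxs; rewrite inE.
by move=> y Py; apply: xs_max; rewrite inE.
Qed.

Lemma positive_spanning_dot_gt0 (w : 'rV[R]_n) :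
  0 < dot w w -> exists2 d, d \in S & 0 < dot d w.
Proof.
move=> ww_gt0; have [l [l_ge0 wE]] := Sspan w.
apply: contrapT => no_pos; suff : dot w w <= 0 by lra.
rewrite {1}wE dotC dot_sumr; apply: sumr_le0 => i _; rewrite dotZr.
apply: mulr_ge0_le0 => //; rewrite leNgt dotC; apply/negP => pos.
by apply: no_pos; exists S`_i => //; exact: mem_nth.
Qed.

End PolarPolytope.

Section Vertices.
Context {R : realType} {n : nat} (S : seq 'rV[R]_n).
Local Notation P := (polar_polytope S).

Definition active_set (y : 'rV[R]_n) : {set 'I_(size S)} :=
  [set i : 'I_(size S) | dot y S`_i == 1].

Lemma polar_polytope_perturb (y w : 'rV[R]_n) : P y ->
  (forall i, i \in active_set y -> dot w S`_i = 0) ->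
  exists2 t, 0 < t & forall sg, `|sg| <= 1 -> P (y + (sg * t) *: w).
Proof.
move=> Py w_act.
pose slack (i : 'I_(size S)) := `|dot w S`_i| / (1 - dot y S`_i).
have slack_ge0 i : 0 <= slack i.
  by rewrite divr_ge0 // subr_ge0 Py // mem_nth.
pose K := 1 + \sum_i slack i.
have slackK i : slack i <= K.
  by rewrite /K (bigD1 i) //= addrCA lerDl addr_ge0 // sumr_ge0.
have K_gt0 : 0 < K by rewrite /K ltr_pwDl // sumr_ge0.
exists K^-1; first by rewrite invr_gt0.
move=> sg sg_le1 d dS; rewrite -(nth_index 0 dS).
have di : (index d S < size S)%N by rewrite index_mem.
set i := Ordinal di; rewrite -[index d S]/(nat_of_ord i).
rewrite dotDl dotZl.
have [yi1|yi_neq1] := eqVneq (dot y S`_i) 1.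
  by rewrite w_act ?inE ?yi1 // mulr0 addr0.
have yi_lt1 : dot y S`_i < 1 by rewrite lt_neqAle yi_neq1 Py // mem_nth.
have : `|dot w S`_i| / K <= 1 - dot y S`_i.
  have := slackK i; rewrite /slack !ler_pdivrMr ?subr_gt0 //; nra.
have : sg * K^-1 * dot w S`_i <= `|dot w S`_i| / K.
  have Kinv_gt0 : 0 < K^-1 by rewrite invr_gt0.
  apply: le_trans (ler_norm _) _; rewrite !normrM (gtr0_norm Kinv_gt0).
  rewrite mulrAC; apply: ler_wpM2r; [exact: ltW | exact: ler_piMl].
lra.
Qed.

Lemma vertex_eq_of_active (y z : 'rV[R]_n) : is_vertex P y ->
  (forall i, i \in active_set y -> dot z S`_i = 1) -> z = y.
Proof.
move=> [Py y_ext] z_act.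
have w_act i : i \in active_set y -> dot (z - y) S`_i = 0.
  by move=> /[dup] /z_act zi; rewrite inE dotBl zi => /eqP ->; rewrite subrr.
have [t t_gt0 Pyt] := polar_polytope_perturb Py w_act.
have sg1 : `|1 : R| <= 1 by rewrite normr1.
have sgN1 : `|-1 : R| <= 1 by rewrite normrN normr1.
have half01 : 0 < (2^-1 : R) < 1.
  by rewrite invr_gt0 invf_lt1 ?ltr0n ?ltr1n.
have mid : y = 2^-1 *: (y + (1 * t) *: (z - y)) + (1 - 2^-1) *: (y + (-1 * t) *: (z - y)).
  by apply/rowP => j; rewrite !mxE; field.
have ends_eq := y_ext _ _ _ (Pyt _ sg1) (Pyt _ sgN1) half01 mid.
have : (2 * t) *: (z - y) = 0.
  apply/rowP => j; have := congr1 (fun u : 'rV[R]_n => u 0 j) ends_eq.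
  rewrite !mxE; lra.
move/eqP; rewrite scaler_eq0 mulf_eq0 pnatr_eq0 (gt_eqF t_gt0) /= subr_eq0.
by move/eqP.
Qed.

End Vertices.

Section NearOptimalDirections.
Context {R : realType} {n : nat} (S : seq 'rV[R]_n).
Local Notation P := (polar_polytope S).

Lemma finite_vertices : exists s : seq 'rV[R]_n, forall v, is_vertex P v -> v \in s.
Proof.
pose pick J := if pselect (exists2 y, is_vertex P y & active_set S y = J) is left e
  then projT1 (cid2 e) else 0.
exists [seq pick J | J : {set 'I_(size S)}] => v v_vert.
apply/mapP; exists (active_set S v); first by rewrite mem_enum.
rewrite /pick; case: pselect => [e|]; last by case; exists v.
case: (cid2 e) => y y_vert /= y_act; apply: vertex_eq_of_active y_vert _ => i.
by rewrite y_act inE => /eqP.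
Qed.

Lemma norm_sq_maximizer_dot_le (xs v : 'rV[R]_n) :
  is_norm_sq_maximizer P xs -> P v -> dot xs v <= dot xs xs.
Proof.
move=> [_ xs_max] Pv; have := xs_max _ Pv; rewrite !enorm_sq => vv_le.
have := dot_le_mean xs v; lra.
Qed.

Lemma vertex_gap (xs : 'rV[R]_n) : is_norm_sq_maximizer P xs ->
  exists2 g, 0 < g & forall v, is_vertex P v -> dot v v < dot xs xs ->
    g <= dot xs xs - dot xs v.
Proof.
move=> xs_max; have [s s_vert] := finite_vertices.
pose gap v := dot xs xs - dot xs v.
exists (\big[Order.min/1]_(v <- s | 0 < gap v) gap v).
  by apply: lt_bigmin => //; exact: ltr01.
move=> v v_vert vv_lt; apply: ge_bigmin_seq; first exact: s_vert.
by rewrite subr_gt0; have := dot_le_mean xs v; lra.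
Qed.

(* Squared form of  gap <= |xs| <c - c0, v - xs> <= 2 |xs|^2 |c - c0|
   with c0 = xs / |xs|. *)
Lemma LP_optimal_gap_le (xs c v : 'rV[R]_n) :
  is_norm_sq_maximizer P xs -> P v -> dot c xs <= dot c v ->
  (dot xs xs - dot xs v) ^+ 2 <=
    4 * dot xs xs ^+ 2 * dot (c - (enorm xs)^-1 *: xs) (c - (enorm xs)^-1 *: xs).
Proof.
move=> xs_max Pv LP_opt; set c0 := (enorm xs)^-1 *: xs.
have [xs0|xs_neq0] := eqVneq xs 0.
  by rewrite xs0 !dot0l subrr expr0n /= mulr_ge0 // dot_ge0.
set N := enorm xs; set xx := dot xs xs; set D := xx - dot xs v.
have vv_le : dot v v <= xx by have := xs_max.2 _ Pv; rewrite !enorm_sq.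
have xxN : xx = N ^+ 2 by rewrite enorm_sq.
have N_gt0 : 0 < N.
  rewrite sqrtr_gt0 lt_neqAle dot_ge0 andbT eq_sym.
  by apply: contraNneq xs_neq0 => /dot_eq0 ->.
have D_ge0 : 0 <= D by rewrite subr_ge0 norm_sq_maximizer_dot_le.
set a := c - c0; set z := v - xs.
have D_le : D <= N * dot a z.
  have cz_ge0 : 0 <= dot c z by rewrite dotBr subr_ge0.
  have -> : N * dot a z = N * dot c z + D.
    by rewrite dotBl dotZl (dotBr v xs xs) -/xx -/N /D; field; rewrite gt_eqF.
  by have := mulr_ge0 (ltW N_gt0) cz_ge0; lra.
have zz_le : dot z z <= 4 * xx.
  have := dot_le_mean v (- xs).
  rewrite !dotBl !dotBr !dotNr !dotNl opprK (dotC xs v) -/xx; lra.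
have D2_le : D ^+ 2 <= N ^+ 2 * dot a z ^+ 2.
  by rewrite -exprMn ler_pXn2r ?nnegrE //; exact: le_trans D_ge0 D_le.
have CS := ler_wpM2l (sqr_ge0 N) (dot_CauchySchwarz a z).
have := ler_wpM2l (mulr_ge0 (sqr_ge0 N) (dot_ge0 a)) zz_le.
rewrite xxN in CS D2_le *; lra.
Qed.

Hypothesis Sunit : forall s, s \in S -> enorm s = 1.
Hypothesis Sspan : positive_spanning S.

Lemma LP_near_maximizer_direction : (0 < n)%N ->
  exists c0 eps, [/\ dot c0 c0 = 1, 0 < eps &
    forall c v, dball c0 eps c -> is_LP_vertex_solution P c v ->
      is_norm_sq_maximizer P v].
Proof.
move=> n_gt0; have [xs xs_max] := exists_norm_sq_maximizer Sspan.
set xx := dot xs xs.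
have xx_ge1 : 1 <= xx := norm_sq_maximizer_ge1 n_gt0 Sunit xs_max.
have [g g_gt0 gap] := vertex_gap xs_max.
have xxN : xx = enorm xs ^+ 2 by rewrite enorm_sq.
exists ((enorm xs)^-1 *: xs), ((g / (2 * xx)) ^+ 2); split.
- rewrite dotZl dotZr -/xx xxN mulrA -expr2 -exprMn mulVf ?expr1n //.
  by rewrite -sqrf_eq0 -xxN; lra.
- by rewrite exprn_gt0 // divr_gt0 //; lra.
move=> c v c_near [v_vert LP_opt]; have Pv := v_vert.1; split => // y Py.
apply: le_trans (xs_max.2 _ Py) _; rewrite !enorm_sq -/xx leNgt; apply/negP => vv_lt.
have := LP_optimal_gap_le xs_max Pv (LP_opt _ xs_max.1).
have := gap _ v_vert vv_lt; move: c_near; rewrite /dball /= -/xx.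
set D := xx - dot xs v; set e := dot _ _ => e_lt g_le.
have : g ^+ 2 <= D ^+ 2 by rewrite ler_pXn2r // ?nnegrE; lra.
have : 4 * xx ^+ 2 * e < g ^+ 2.
  move: e_lt; rewrite expr_div_n ltr_pdivlMr ?exprn_gt0 //; last by lra.
  by rewrite exprMn; lra.
lra.
Qed.

End NearOptimalDirections.

Section CosineMeasure.
Context {R : realType} {n : nat} (S : seq 'rV[R]_n).
Hypothesis Sunit : forall s, s \in S -> enorm s = 1.
Local Notation P := (polar_polytope S).

Lemma max_cosE u : max_cos S u = sup [set dot d u | d in [set d | d \in S]].
Proof.
rewrite /max_cos; congr sup; apply/seteqP; split => _ [d dS <-];
  by exists d => //; rewrite Sunit // divr1.
Qed.

Lemma max_cos_ge u d : d \in S -> dot d u <= max_cos S u.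
Proof.
move=> dS; rewrite max_cosE; apply: ub_le_sup; last by exists d.
exists (\sum_(d' <- S) `|dot d' u|) => _ [d' d'S <-].
by apply: le_trans (ler_norm _) _; rewrite (big_rem d' d'S) /= lerDl sumr_ge0.
Qed.

Lemma max_cos_le u B : S != [::] -> (forall d, d \in S -> dot d u <= B) ->
  max_cos S u <= B.
Proof.
move=> S_neq0 S_le; rewrite max_cosE; apply: ge_sup => [|_ [d dS <-]]; last exact: S_le.
by exists (dot S`_0 u), S`_0 => //; apply: mem_nth; rewrite lt0n size_eq0.
Qed.

Hypothesis Sspan : positive_spanning S.

Lemma max_cos_normalize_le v : P v -> 0 < dot v v ->
  max_cos S ((enorm v)^-1 *: v) <= (enorm v)^-1.
Proof.
move=> Pv vv_gt0; have [d0 d0S _] := positive_spanning_dot_gt0 Sspan vv_gt0.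
apply: max_cos_le => [|d dS]; first by apply: contraTneq d0S => ->.
rewrite dotZr dotC -[leRHS]mulr1 ler_wpM2l ?Pv // invr_ge0.
exact: sqrtr_ge0.
Qed.

Lemma norm_sq_maximizer_inv_le_max_cos v w : is_norm_sq_maximizer P v ->
  unit_sphere w -> (enorm v)^-1 <= max_cos S w.
Proof.
move=> [_ v_max] w_unit.
have ww_gt0 : 0 < dot w w by rewrite -enorm_sq w_unit expr1n.
have [d dS dw_gt0] := positive_spanning_dot_gt0 Sspan ww_gt0.
set m := max_cos S w.
have m_gt0 : 0 < m := lt_le_trans dw_gt0 (max_cos_ge w dS).
have P_wm : P (m^-1 *: w).
  by move=> d' d'S; rewrite dotZl dotC ler_pdivrMl // mulr1 max_cos_ge.
have m_inv_gt0 : 0 < m^-1 by rewrite invr_gt0.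
have := v_max _ P_wm; rewrite enormZ w_unit mulr1 (gtr0_norm m_inv_gt0).
rewrite ler_pXn2r ?nnegrE ?sqrtr_ge0 ?(ltW m_inv_gt0) // => m_inv_le.
have v_gt0 : 0 < enorm v := lt_le_trans m_inv_gt0 m_inv_le.
by rewrite -(invrK m) lef_pV2 ?posrE ?invr_gt0.
Qed.

Lemma norm_sq_maximizer_cosine v : is_norm_sq_maximizer P v -> 0 < dot v v ->
  is_cosine_vector S ((enorm v)^-1 *: v) /\ (enorm v)^-1 = cosine_measure S.
Proof.
move=> v_max vv_gt0; set u := (enorm v)^-1 *: v.
have v_gt0 : 0 < enorm v by rewrite sqrtr_gt0.
have u_unit : unit_sphere u.
  by rewrite /unit_sphere /= enormZ gtr0_norm ?invr_gt0 // mulVf ?gt_eqF.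
have cos_le := max_cos_normalize_le v_max.1 vv_gt0.
have cos_ge := norm_sq_maximizer_inv_le_max_cos v_max.
split; first by split => // w /cos_ge; exact: le_trans.
apply/eqP; rewrite eq_le; apply/andP; split.
  apply: lb_le_inf; first by exists (max_cos S u), u.
  by move=> _ [w w_unit <-]; exact: cos_ge.
apply: le_trans cos_le; apply: ge_inf; last by exists u.
by exists (enorm v)^-1 => _ [w w_unit <-]; exact: cos_ge.
Qed.

End CosineMeasure.

Section BestIterate.
Context {R : realType} {n : nat}.
Implicit Types (vb : nat -> 'rV[R]_n) (A : set 'rV[R]_n).

Lemma best_iterate_mem A vb : A 0 -> (forall k, A (vb k)) ->
  forall j, A (best_iterate vb j).
Proof. by move=> A0 A_vb; elim=> //= j IH; case: ifP. Qed.

Lemma best_iterate_ge vb i j : (i < j)%N ->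
  dot (vb i) (vb i) <= dot (best_iterate vb j) (best_iterate vb j).
Proof.
elim: j => // j IH; rewrite ltnS leq_eqVlt /=.
case: ifPn => [better|not_better].
  rewrite enorm_ltE in better.
  by move=> /predU1P [->|/IH le_j] //; exact: le_trans le_j (ltW better).
by rewrite enorm_ltE -leNgt in not_better; move=> /predU1P [->|/IH].
Qed.

Lemma best_iterate_norm_sq_maximizer A vb k j : A 0 -> (forall k, A (vb k)) ->
  is_norm_sq_maximizer A (vb k) -> (k < j)%N ->
  is_norm_sq_maximizer A (best_iterate vb j).
Proof.
move=> A0 A_vb [_ vb_max] kj; split; first exact: best_iterate_mem.
move=> y Ay; apply: le_trans (vb_max _ Ay) _.
by rewrite !enorm_sq best_iterate_ge.
Qed.

End BestIterate.

Section OrthogonalTransport.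
Context {R : realType} {n : nat}.
Implicit Types x y p u : 'rV[R]_n.

Lemma dot_orthogonal_mx (Q : 'M[R]_n) x y : orthogonal_mx Q ->
  dot (x *m Q) (y *m Q) = dot x y.
Proof. by move=> Q_orth; rewrite !dot_mx trmx_mul mulmxA -(mulmxA x) Q_orth mulmx1. Qed.

Lemma mul_trmx_row (u v : 'rV[R]_n) : u *m v^T = (dot u v)%:M.
Proof. by rewrite [LHS]mx11_scalar dot_mx. Qed.

Lemma householder_reflection p u : dot p p = 1 -> dot u u = 1 ->
  exists2 Q : 'M[R]_n, orthogonal_mx Q & p *m Q = u.
Proof.
move=> pp uu; have [<-|p_neq_u] := eqVneq p u.
  by exists 1%:M; rewrite ?mulmx1 // /orthogonal_mx trmx1 mulmx1.
pose w := p - u; pose b := 2 / dot w w.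
have ww_neq0 : dot w w != 0.
  by apply: contraNneq p_neq_u => /dot_eq0 /eqP; rewrite subr_eq0.
have ww_2pw : dot w w = 2 * dot p w.
  by rewrite /w !dotBl !dotBr pp uu (dotC u p); ring.
pose M := w^T *m w; pose Q := 1%:M - b *: M.
have MM : M *m M = dot w w *: M.
  by rewrite /M mulmxA -(mulmxA w^T) mul_trmx_row mul_mx_scalar -scalemxAl.
have QT : Q^T = Q by rewrite /Q linearB /= linearZ /= trmx1 /M trmx_mul trmxK.
exists Q.
  rewrite /orthogonal_mx QT /Q mulmxBl mul1mx mulmxBr mulmx1.
  rewrite -scalemxAl -scalemxAr MM !scalerA.
  have -> : b * b * dot w w = 2 * b by rewrite /b; field.
  by apply/matrixP => i j; rewrite !mxE; ring.
rewrite /Q mulmxBr mulmx1 -scalemxAr /M mulmxA mul_trmx_row mul_scalar_mx scalerA.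
have pw_neq0 : dot p w != 0.
  by apply: contraNneq ww_neq0; rewrite ww_2pw => ->; rewrite mulr0.
have -> : b * dot p w = 1 by rewrite /b ww_2pw; field.
by rewrite scale1r /w opprB addrC subrK.
Qed.

Lemma dball_orthogonal_preimage (Q : 'M[R]_n) p u (e : R) :
  orthogonal_mx Q -> p *m Q = u ->
  (fun x => x *m Q) @^-1` dball u e = dball p e.
Proof.
move=> Q_orth <-; apply/seteqP; split => x.
  by rewrite /dball /= -mulmxBl dot_orthogonal_mx.
by rewrite /dball /= -mulmxBl dot_orthogonal_mx.
Qed.

End OrthogonalTransport.

Section UniformOnSphere.
Context {R : realType} {n : nat} {d : measure_display} {T : measurableType d}.
Variable Pr : probability T R.

Lemma borel_rV_open (A : set 'rV[R]_n) : open A -> borel_rV A.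
Proof. by move=> A_open; apply: sub_gen_smallest. Qed.

Lemma borel_rV_closed (A : set 'rV[R]_n) : closed A -> borel_rV A.
Proof.
move=> A_closed; rewrite -(setCK A); apply: sigma_algebraC.
by apply: borel_rV_open; exact: closed_openC.
Qed.

Lemma uniform_on_sphere_dim_gt0 (X : T -> 'rV[R]_n) :
  uniform_on_sphere Pr X -> (0 < n)%N.
Proof.
move: X; case: n => // X [sphere1 _]; move: sphere1.
have -> : unit_sphere = set0 :> set 'rV[R]_0.
  rewrite unit_sphereE; apply/seteqP; split => x //=.
  by rewrite /dot big_ord0 => /esym/eqP; rewrite oner_eq0.
by rewrite preimage_set0 measure0 => /esym/eqP; rewrite onee_eq0.
Qed.

Lemma unit_sphere_cover (e : R) : 0 < e -> exists s : seq 'rV[R]_n,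
  (forall p, p \in s -> dot p p = 1) /\
  unit_sphere `<=` \bigcup_(p in [set p | p \in s]) dball p e.
Proof.
move=> e_gt0; have := @compact_unit_sphere R n.
rewrite compact_cover => /(_ _ unit_sphere (fun p => dball p e)) [||D D_sphere cover].
- by move=> p _; exact: open_dball.
- by move=> x x_sphere; exists x => //; rewrite /dball /= subrr dot0l.
exists (finmap.enum_fset D); split => [p /D_sphere|x /cover [p pD px]].
  by rewrite unit_sphereE inE.
by exists p.
Qed.

Lemma uniform_on_sphere_dball_ge (u : 'rV[R]_n) (e : R) : dot u u = 1 -> 0 < e ->
  exists2 p, 0 < p & forall X, random_vector X -> uniform_on_sphere Pr X ->
    (p%:E <= Pr (X @^-1` dball u e))%E.
Proof.
move=> uu e_gt0; have [s [s_sphere cover]] := unit_sphere_cover e_gt0.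
have s_gt0 : (0 < size s)%N.
  have /cover [p ps _] : unit_sphere u by rewrite unit_sphereE.
  by rewrite lt0n size_eq0; apply: contraTneq ps => ->.
exists (size s)%:R^-1; first by rewrite invr_gt0 ltr0n.
move=> X X_rand [sphere1 X_inv].
have ball_meas p : measurable (X @^-1` dball p e).
  by apply: X_rand; apply: borel_rV_open; exact: open_dball.
have ball_eq p : p \in s -> Pr (X @^-1` dball p e) = Pr (X @^-1` dball u e).
  move=> ps; have [Q Q_orth pQ] := householder_reflection (s_sphere p ps) uu.
  rewrite -(dball_orthogonal_preimage e Q_orth pQ) X_inv //.
  by apply: borel_rV_open; exact: open_dball.
have : (1 <= \sum_(k < size s) Pr (X @^-1` dball s`_k e))%E.
  have sphere_meas : measurable (X @^-1` unit_sphere).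
    by apply: X_rand; apply: borel_rV_closed; exact: closed_unit_sphere.
  have sphere_sub : X @^-1` unit_sphere `<=`
      \big[setU/set0]_(k < size s) (X @^-1` dball s`_k e).
    move=> w /cover [p ps pw]; rewrite -(bigcup_mkord _ (fun k => X @^-1` dball s`_k e)).
    by exists (index p s); rewrite /= ?index_mem ?nth_index.
  rewrite -sphere1; exact: (@content_subadditive _ _ _ Pr _
    (fun k => X @^-1` dball s`_k e) _ (fun k _ => ball_meas _) sphere_meas sphere_sub).
have ball_fin : Pr (X @^-1` dball u e) = (fine (Pr (X @^-1` dball u e)))%:E.
  by rewrite fineK // fin_num_measure.
rewrite ball_fin (eq_bigr (fun=> (fine (Pr (X @^-1` dball u e)))%:E)); last first.
  by move=> k _; rewrite ball_eq ?mem_nth // ball_fin.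
rewrite sumEFin sumr_const card_ord !lee_fin => sum_ge1.
by rewrite -[leLHS]mul1r ler_pdivrMr ?ltr0n // mulr_natr.
Qed.

End UniformOnSphere.

Section Independence.
Context {R : realType} {n : nat} {d : measure_display} {T : measurableType d}.
Variable Pr : probability T R.

Lemma prode_le_expr (I : Type) (s : seq I) (f : I -> \bar R) (q : R) :
  (forall i, 0 <= f i <= q%:E)%E -> (\prod_(i <- s) f i <= (q ^+ size s)%:E)%E.
Proof.
move=> f_bnd; elim: s => [|a s IH]; first by rewrite big_nil expr0.
have /andP [fa_ge0 fa_le] := f_bnd a.
rewrite big_cons exprS EFinM; apply: lee_pmul => //.
by apply: prode_ge0 => i; case/andP: (f_bnd i).
Qed.

Lemma probability_setC_le (A : set T) (p : R) : measurable A ->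
  (p%:E <= Pr A -> Pr (~` A) <= (1 - p)%:E)%E.
Proof.
move=> A_meas; rewrite probability_setC // -(fineK (fin_num_measure _ _ A_meas)).
by rewrite !lee_fin => ?; lra.
Qed.

Lemma independent_avoidance_null (X : nat -> T -> 'rV[R]_n) (A : set 'rV[R]_n)
    (q : R) :
  mutually_independent Pr X -> (forall k, random_vector (X k)) -> borel_rV A ->
  q < 1 -> (forall k, Pr (X k @^-1` A) <= q%:E)%E ->
  Pr (\bigcap_k X k @^-1` A) = 0%E.
Proof.
move=> X_indep X_rand A_borel q_lt1 A_le.
have A_meas k : measurable (X k @^-1` A) by exact: X_rand.
have A_bnd k : (0 <= Pr (X k @^-1` A) <= q%:E)%E by rewrite measure_ge0 A_le.
have q_ge0 : 0 <= q by rewrite -lee_fin (le_trans (measure_ge0 _ _) (A_le 0%N)).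
set N := \bigcap_k X k @^-1` A.
have N_meas : measurable N by exact: bigcapT_measurable.
have N_le M : fine (Pr N) <= q ^+ M.
  have I_meas : measurable (\bigcap_(i in [set i | i \in iota 0 M]) (X i @^-1` A)).
    exact: bigcap_measurableType.
  rewrite -lee_fin fineK ?fin_num_measure //.
  apply: le_trans (le_measure Pr (mem_set N_meas) (mem_set I_meas) _) _.
    by move=> w Nw i _; exact: Nw.
  move: (X_indep _ (fun=> A) (iota_uniq 0 M) (fun=> A_borel)) => /= ->.
  rewrite -[M in (_ <= (_ ^+ M)%:E)%E](size_iota 0 M).
  exact: prode_le_expr.
have : fine (Pr N) <= 0.
  apply: (cvgr_to_ge (cvg_expr (_ : `|q| < 1))); first by rewrite ger0_norm.
  by apply: nearW => M; exact: N_le.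
have : 0 <= fine (Pr N) by rewrite fine_ge0 // measure_ge0.
rewrite -(fineK (fin_num_measure _ _ N_meas)) => N_ge0 N_le0.
by congr (_%:E); apply/eqP; rewrite eq_le N_le0 N_ge0.
Qed.

End Independence.

Unset Implicit Arguments. Set Strict Implicit.

Theorem theorem9 (R : realType) (n : nat) (S : seq 'rV[R]_n)
    (d : measure_display) (T : measurableType d) (Pr : probability T R)
    (c : nat -> T -> 'rV[R]_n) (vbar : nat -> T -> 'rV[R]_n) :
  (forall s, s \in S -> enorm s = 1) ->
  positive_spanning S ->
  (forall k, random_vector (c k)) ->
  (forall k, uniform_on_sphere Pr (c k)) ->
  mutually_independent Pr c ->
  (forall k w, is_LP_vertex_solution (polar_polytope S) (c k w) (vbar k w)) ->
  {ae Pr, forall w, exists K : nat, forall k : nat, (K <= k)%N ->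
     let v := best_iterate (vbar ^~ w) k in
     [/\ is_norm_sq_maximizer (polar_polytope S) v,
         is_cosine_vector S ((enorm v)^-1 *: v) &
         (enorm v)^-1 = cosine_measure S]}.
Proof.
move=> Sunit Sspan c_rand c_unif c_indep vbar_LP.
have n_gt0 := uniform_on_sphere_dim_gt0 (c_unif 0%N).
have [c0 [eps [c0_unit eps_gt0 near_opt]]] :=
  LP_near_maximizer_direction Sunit Sspan n_gt0.
have U_borel : borel_rV (dball c0 eps) by apply: borel_rV_open; exact: open_dball.
have [p p_gt0 hit_ge] := uniform_on_sphere_dball_ge Pr c0_unit eps_gt0.
have miss_null : Pr (\bigcap_k c k @^-1` ~` dball c0 eps) = 0%E.
  apply: (independent_avoidance_null c_indep c_rand (sigma_algebraC U_borel)
    (_ : 1 - p < 1)) => [|k]; first lra.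
  rewrite preimage_setC.
  exact: probability_setC_le (c_rand k _ U_borel) (hit_ge _ (c_rand k) (c_unif k)).
exists (\bigcap_k c k @^-1` ~` dball c0 eps); split => //.
  by apply: bigcapT_measurable => k; apply: c_rand; exact: sigma_algebraC.
move=> w /= no_limit k _ hit; apply: no_limit; exists k.+1 => j kj.
set v := best_iterate _ j.
have v_max : is_norm_sq_maximizer (polar_polytope S) v.
  apply: (best_iterate_norm_sq_maximizer (@polar_polytope0 _ _ S)) kj => [i|].
    exact: (vbar_LP i w).1.1.
  exact: near_opt hit (vbar_LP k w).
have vv_gt0 := lt_le_trans ltr01 (norm_sq_maximizer_ge1 n_gt0 Sunit v_max).
by have [] := norm_sq_maximizer_cosine Sunit Sspan v_max vv_gt0.
Qed.
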